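(* Let $m\ge1$ and let $1\le K\le N\le 2^m-1$ be integers. Define the bit-level decoding radius $$e^*=\min\Big\{\sum_{i=0}^m i\,a_i \;:\; a_0,\dots,a_m\in\mathbb{Z}_{\ge0},\ \sum_{i=0}^m a_i=N,\ \sum_{i=0}^m a_i2^{-i}\le K-1\Big\}.$$ Then $e^*=2(N-K+1)$ if $K\ge \frac12N+1$, and $e^*=3N-4(K-1)$ if $\frac14N+1\le K\le\frac12N+1$.
   Context: Setting: a Reed–Solomon code of length $N$ and dimension $K$ over $GF(2^m)$ whose symbols are sent as $m$ bits each over a binary erasure channel. $a_i$ is the number of received symbols with exactly $i$ erased bits (''type $i$''), so $\sum_i i a_i$ is the total number of erased bits. Under the proportional multiplicity assignment (each of the $2^i$ candidates of a type-$i$ symbol gets multiplicity $M2^{-i}$), the algebraic soft decoding sufficient condition $S\ge\sqrt{2(K-1)C}$, with score $S=\sum_i a_i M2^{-i}$ and cost $C=\frac12\sum_i a_i2^i(M2^{-i})^2$, is equivalent to $\eta=\sum_i a_i2^{-i}\ge K-1$; $e^*$ is the smallest number of erased bits for which the erasure pattern can bring $\eta$ down to at most $K-1$. *)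

From mathcomp Require Import all_boot all_order all_algebra.
Set Implicit Arguments. Unset Strict Implicit. Unset Printing Implicit Defensive.
Import Order.TTheory GRing.Theory Num.Theory.

Definition erased_bits (m : nat) (a : 'I_m.+1 -> nat) : nat :=
  (\sum_(i < m.+1) i * a i)%N.

Definition num_symbols (m : nat) (a : 'I_m.+1 -> nat) : nat :=
  (\sum_(i < m.+1) a i)%N.

Definition eta (m : nat) (a : 'I_m.+1 -> nat) : rat :=
  (\sum_(i < m.+1) (a i)%:R / (2%:R ^+ i))%R.

Definition feasible (m N K : nat) (a : 'I_m.+1 -> nat) : Prop :=
  num_symbols a = N /\ (eta a <= (K%:R - 1 : rat))%R.

Definition is_e_star (m N K e : nat) : Prop :=
  (exists a : 'I_m.+1 -> nat, feasible N K a /\ erased_bits a = e) /\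
  (forall a : 'I_m.+1 -> nat, feasible N K a -> e <= erased_bits a)%N.

From mathcomp Require Import all_boot all_order all_algebra.
From mathcomp Require Import ring lra zify.
Set Implicit Arguments.
Unset Strict Implicit.
Unset Printing Implicit Defensive.

Import Order.TTheory GRing.Theory Num.Theory.
Local Open Scope ring_scope.

(** Since the sequence 2^-i is convex, it lies above its chord through the
    types j and j+1, i.e. i + 2^(j+1) 2^-i >= j + 2 for every type i.
    Summing over the N symbols gives (j+2) N <= e + 2^(j+1) eta
    <= e + 2^(j+1) (K-1), with equality exactly for profiles supported on the
    types j and j+1 with eta = K-1; such a profile exists as soon as
    2^j (K-1) <= N <= 2^(j+1) (K-1).  The two cases of the theorem are
    j = 0 and j = 1. *)

Lemma leq_exp2_secant (i j : nat) : (j.+2 * 2 ^ i <= i * 2 ^ i + 2 ^ j.+1)%N.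
Proof.
have [ji | ij] := leqP j.+2 i.
  by apply: leq_trans (leq_addr _ _); rewrite leq_mul2r ji orbT.
have [t ->] : exists t, j.+1 = (i + t)%N by exists (j.+1 - i)%N; lia.
rewrite -addnS mulnDl expnD leq_add2l mulnC leq_mul2l.
by rewrite ltn_expl ?orbT.
Qed.

Lemma exp2_secant (R : realFieldType) (i j : nat) :
  j.+2%:R <= i%:R + 2 ^+ j.+1 / 2 ^+ i :> R.
Proof.
have pos_2i : 0 < 2 ^+ i :> R by rewrite exprn_gt0.
rewrite -(ler_pM2r pos_2i) [leRHS]mulrDl divfK ?gt_eqF //.
by rewrite -!natrX -!natrM -natrD ler_nat leq_exp2_secant.
Qed.

Lemma weighted_num_symbols_le (m : nat) (a : 'I_m.+1 -> nat) (c d : rat) :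
  (forall i : nat, c <= i%:R + d / 2 ^+ i) ->
  c * (num_symbols a)%:R <= (erased_bits a)%:R + d * eta a.
Proof.
move=> weight_ge; rewrite /num_symbols /erased_bits /eta.
rewrite !natr_sum !mulr_sumr -big_split /=; apply: ler_sum => i _.
rewrite natrM [in leRHS]mulrC [in leRHS]mulrCA -mulrDr [leLHS]mulrC.
by rewrite ler_wpM2l.
Qed.

Lemma feasible_erased_bits_ge (m N k j : nat) (a : 'I_m.+1 -> nat) :
  feasible N k.+1 a -> (j.+2 * N - 2 ^ j.+1 * k <= erased_bits a)%N.
Proof.
move=> [<- eta_le]; rewrite leq_subLR -(ler_nat rat) natrD !natrM natrX.
rewrite -natr1 addrK in eta_le.
have eta_le_k : 2 ^+ j.+1 * eta a <= 2 ^+ j.+1 * k%:R.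
  by rewrite ler_wpM2l ?exprn_ge0.
have := weighted_num_symbols_le a (fun i => exp2_secant _ i j).
lra.
Qed.

Definition two_type_profile (m : nat) (j k : 'I_m.+1) (x y : nat) :
    'I_m.+1 -> nat :=
  fun i => if i == j then x else if i == k then y else 0%N.

Section TwoTypeProfile.

Variables (m : nat) (j k : 'I_m.+1) (x y : nat).
Hypothesis neq_jk : j != k.
Let a := two_type_profile j k x y.

Lemma sum_two_type_profile (V : nmodType) (f : 'I_m.+1 -> nat -> V) :
  (forall i, f i 0%N = 0) -> \sum_i f i (a i) = f j x + f k y.
Proof.
move=> f_0; rewrite (bigD1 j) // (bigD1 k) 1?eq_sym //= big1 ?addr0.
  by rewrite /a /two_type_profile eqxx eq_sym (negbTE neq_jk) eqxx.
by move=> i /andP[/negbTE ik /negbTE ij]; rewrite /a /two_type_profile ij ik.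
Qed.

Lemma num_symbols_two_type : num_symbols a = (x + y)%N.
Proof. exact: (sum_two_type_profile (f := fun _ n => n)). Qed.

Lemma erased_bits_two_type : erased_bits a = (j * x + k * y)%N.
Proof.
by apply: (sum_two_type_profile (f := fun i n => i * n)%N) => i; rewrite muln0.
Qed.

Lemma eta_two_type : eta a = x%:R / 2 ^+ j + y%:R / 2 ^+ k.
Proof.
by apply: (sum_two_type_profile (f := fun i n => n%:R / 2 ^+ i)) => i;
  rewrite mul0r.
Qed.

End TwoTypeProfile.

Lemma is_e_star_two_types (m N k j : nat) :
  (j < m)%N -> (2 ^ j * k <= N <= 2 ^ j.+1 * k)%N ->
  is_e_star m N k.+1 (j.+2 * N - 2 ^ j.+1 * k).
Proof.
move=> lt_jm N_bounds; split; last by move=> a; apply: feasible_erased_bits_ge.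
have [j0 j0E] : exists j0 : 'I_m.+1, j0 = j :> nat.
  by exists (inord j); rewrite inordK // ltnS ltnW.
have [j1 j1E] : exists j1 : 'I_m.+1, j1 = j.+1 :> nat.
  by exists (inord j.+1); rewrite inordK.
have neq_j01 : j0 != j1 by rewrite -val_eqE /= j0E j1E; lia.
set x := (2 ^ j.+1 * k - N)%N; set y := (2 * N - 2 ^ j.+1 * k)%N.
have xy_N : (x + y = N)%N by rewrite /x /y expnS in N_bounds *; lia.
exists (two_type_profile j0 j1 x y); split; first split.
- by rewrite num_symbols_two_type.
- rewrite (eta_two_type _ _ neq_j01) j0E j1E.
  suff -> : x%:R / 2 ^+ j + y%:R / 2 ^+ j.+1 = k%:R :> rat.
    by rewrite -natr1 addrK.
  have /andP[_ le_N] := N_bounds.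
  have le_y : (2 ^ j.+1 * k <= 2 * N)%N by rewrite expnS in N_bounds *; lia.
  rewrite /x /y (natrB _ le_N) (natrB _ le_y) !natrM !natrX exprS.
  field; exact: expf_neq0.
- rewrite (erased_bits_two_type _ _ neq_j01) j0E j1E.
  rewrite /x /y expnS in N_bounds *; nia.
Qed.

Theorem theorem1 (m N K : nat) :
  (1 <= m)%N -> (1 <= K)%N -> (K <= N)%N -> (N <= 2 ^ m - 1)%N ->
  ((N + 2 <= 2 * K)%N -> is_e_star m N K (2 * (N - K + 1))) /\
  ((N + 4 <= 4 * K)%N -> (2 * K <= N + 2)%N ->
     is_e_star m N K (3 * N - 4 * (K - 1))).
Proof.
case: K => // k m_ge1 _ le_kN le_N2m; split => [le_N2K | le_N4K le_2KN].
  have -> : (2 * (N - k.+1 + 1) = 0.+2 * N - 2 ^ 1 * k)%N by lia.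
  by apply: is_e_star_two_types => //=; lia.
have lt_1m : (1 < m)%N.
  by case: m m_ge1 le_N2m => [|[|m]] // _; rewrite expn1; lia.
have -> : (3 * N - 4 * (k.+1 - 1) = 1.+2 * N - 2 ^ 2 * k)%N by lia.
by apply: is_e_star_two_types => //=; lia.
Qed.
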